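(* For every integer $n\geq 4$ there exist connected graphs $G$ and $H$ on $n$ vertices such that $\psi(G)=\psi(H)$ but $G$ and $H$ are not isomorphic.
   Context: All graphs are finite, simple and nonempty. For a graph $G$ and a positive integer $k$, a $k$-path vertex cover ($k$-PVC) of $G$ is a set $S$ of vertices such that every path on $k$ vertices in $G$ contains at least one vertex of $S$ (if $G$ has no path on $k$ vertices, the empty set is a $k$-PVC). $\psi_k(G)$ denotes the minimum cardinality of a $k$-PVC of $G$. For a graph $G$ on $n$ vertices, the path sequence of $G$ is $\psi(G)=(\psi_1(G),\psi_2(G),\ldots,\psi_n(G))$. *)

From mathcomp Require Import all_boot.
From mathcomp Require Import tuple.
Set Implicit Arguments. Unset Strict Implicit. Unset Printing Implicit Defensive.

Record sgraph (n : nat) := SGraph {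
  adj : rel 'I_n;
  adj_sym : symmetric adj;
  adj_irr : irreflexive adj }.

Definition is_kpath n (G : sgraph n) (k : nat) (p : seq 'I_n) : bool :=
  [&& size p == k, uniq p & match p with
                            | [::] => true
                            | x :: q => path (adj G) x q end].

Definition is_kpvc n (G : sgraph n) (k : nat) (S : {set 'I_n}) : bool :=
  [forall p : k.-tuple 'I_n, is_kpath G k p ==> has (fun v => v \in S) p].

(* psi_k(G): minimum cardinality of a k-PVC. For k >= 1, the full vertex set
   is a k-PVC of size n, so the minimum with default n is exact. *)
Definition psi n (G : sgraph n) (k : nat) : nat :=
  \big[minn/n]_(S : {set 'I_n} | is_kpvc G k S) #|S|.

Definition path_seq n (G : sgraph n) : seq nat := [seq psi G k | k <- iota 1 n].

Definition connected_graph n (G : sgraph n) : Prop :=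
  forall x y : 'I_n, connect (adj G) x y.

Definition isomorphic n (G H : sgraph n) : Prop :=
  exists f : 'I_n -> 'I_n, bijective f /\ forall x y, adj H (f x) (f y) = adj G x y.

From mathcomp Require Import all_boot zify.
Set Implicit Arguments. Unset Strict Implicit. Unset Printing Implicit Defensive.

(** Take for G the complete graph minus one edge and for H the complete graph
minus two disjoint edges. In both graphs every vertex has at most one
non-neighbour, so any k >= 3 distinct vertices can be ordered into a path (add
them one at a time, at whichever end of the current path is adjacent to the new
vertex), while any 2 vertices span a 2-path only if they are adjacent. Hence for
k <> 2 both graphs have psi_k = n - k + 1, the bound of the trivial cover by
all but k - 1 vertices, and psi_2 = n - 2 since both graphs have a non-edge.
They are not isomorphic because they have different numbers of non-edges. *)

Lemma exists_uniq_seq_sub (T : finType) (A : {set T}) k : k <= #|A| ->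
  exists s : seq T, [/\ uniq s, size s = k & {subset s <= A}].
Proof.
move=> le_kA; exists (take k (enum A)); split.
- by rewrite take_uniq ?enum_uniq.
- by rewrite size_take -cardE; case: ltnP => // ?; lia.
- by move=> x /mem_take; rewrite mem_enum.
Qed.

Section PathCovers.
Variables (n : nat) (G : sgraph n).

Lemma psi_le_card k S : is_kpvc G k S -> psi G k <= #|S|.
Proof.
move=> coverS; rewrite /psi.
have : S \in index_enum {set 'I_n} by rewrite mem_index_enum.
elim: (index_enum _) => // A r IH; rewrite inE big_cons => /orP [/eqP <-|/IH].
  by rewrite coverS geq_minl.
by case: ifP => // _ le_r; rewrite geq_min le_r orbT.
Qed.

Lemma leq_psi k m :
  (forall S, is_kpvc G k S -> m <= #|S|) -> m <= n -> m <= psi G k.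
Proof.
move=> le_cover le_mn; rewrite /psi; elim/big_ind: _ => // x y le_mx le_my.
by rewrite leq_min le_mx le_my.
Qed.

Lemma kpvc_setC k (U : {set 'I_n}) : #|U| < k -> is_kpvc G k (~: U).
Proof.
move=> ltUk; apply/forallP => p; apply/implyP => /and3P [/eqP size_p uniq_p _].
apply/negPn/negP => /hasPn inU.
have : size p <= #|U|.
  by rewrite cardE; apply: uniq_leq_size => // x /inU; rewrite in_setC negbK mem_enum.
by rewrite size_tuple; lia.
Qed.

Lemma kpath_not_kpvc k S p : is_kpath G k p -> {subset p <= ~: S} -> ~~ is_kpvc G k S.
Proof.
move=> kpath_p offS; have size_p : size p == k by case/and3P: kpath_p.
apply/negP => /forallP /(_ (Tuple size_p)) /implyP /(_ kpath_p) /hasP [x /offS].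
by rewrite in_setC => /negP.
Qed.

Lemma psi_le_subn k : 0 < k <= n -> psi G k <= n - k.-1.
Proof.
case/andP=> k_gt0 le_kn.
have [s [uniq_s size_s _]] :
    exists s : seq 'I_n, [/\ uniq s, size s = k.-1 & {subset s <= [set: 'I_n]}].
  by apply: exists_uniq_seq_sub; rewrite cardsT card_ord; lia.
have card_s : #|[set x in s]| = k.-1 by rewrite cardsE -size_s; apply/card_uniqP.
apply: leq_trans (psi_le_card (kpvc_setC (U := [set x in s]) _)) _.
  by rewrite card_s; lia.
by rewrite cardsCs setCK card_ord card_s.
Qed.

Lemma psi2_le_nonedge u w : u != w -> ~~ adj G u w -> psi G 2 <= n - 2.
Proof.
move=> neq_uw nadj_uw.
have card_C : #|~: [set u; w]| = n - 2.
  by have := cardsC [set u; w]; rewrite cards2 neq_uw card_ord; lia.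
rewrite -card_C; apply: psi_le_card; apply/forallP => p; apply/implyP => /and3P [_ _].
case: p => [[|x [|y [|]]] //] /= _; rewrite andbT => adj_xy.
rewrite !in_setC !in_set2 orbF -negb_and; apply: contra nadj_uw => /andP [].
by move: adj_xy => + /orP [] /eqP ? /orP [] /eqP ?; subst; rewrite ?adj_irr // adj_sym.
Qed.

(* A k-PVC must miss fewer than m vertices. *)
Lemma psi_ge_of_kpaths k m :
  (forall s, uniq s -> size s = m -> exists2 p, is_kpath G k p & {subset p <= s}) ->
  m <= n -> n - m.-1 <= psi G k.
Proof.
move=> kpath_in le_mn; apply: leq_psi => [S coverS|]; last by lia.
rewrite leqNgt; apply/negP => small_S.
have [s [uniq_s size_s sub_s]] : exists s, [/\ uniq s, size s = m & {subset s <= ~: S}].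
  by apply: exists_uniq_seq_sub; have := cardsC S; rewrite card_ord; lia.
have [p kpath_p sub_p] := kpath_in s uniq_s size_s.
by move: coverS; apply/negP/(kpath_not_kpvc kpath_p) => x /sub_p /sub_s.
Qed.

End PathCovers.

(* Every vertex has at most one non-neighbour: the complement of G is a matching. *)
Definition comatching n (G : sgraph n) : Prop :=
  forall x v w : 'I_n, v != w -> x != v -> x != w -> adj G x v || adj G x w.

Section Comatching.
Variables (n : nat) (G : sgraph n).
Hypothesis G_comatching : comatching G.

Lemma comatching_connected : 2 < n -> connected_graph G.
Proof.
move=> n_gt2 x y; have [-> | neq_xy] := eqVneq x y; first exact: connect0.
have [adj_xy | nadj_xy] := boolP (adj G x y); first exact: connect1.
have /set0Pn [z] : ~: [set x; y] != set0.
  by rewrite -card_gt0; have := cardsC [set x; y]; rewrite cards2 card_ord; lia.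
rewrite in_setC in_set2 negb_or ![z == _]eq_sym => /andP [neq_xz neq_yz].
have adj_xz : adj G x z by have := G_comatching neq_yz neq_xy neq_xz; rewrite (negbTE nadj_xy).
have adj_zy : adj G z y.
  have neq_yx : y != x by rewrite eq_sym.
  have := G_comatching neq_xz neq_yx neq_yz.
  by rewrite adj_sym (negbTE nadj_xy) /= adj_sym.
exact: connect_trans (connect1 adj_xz) (connect1 adj_zy).
Qed.

Lemma comatching_extend x q v : path (adj G) x q -> q != [::] -> uniq (x :: q) ->
  v \notin x :: q -> exists2 p, is_kpath G (size q).+2 p & {subset p <= v :: x :: q}.
Proof.
move=> path_xq q_nil uniq_xq v_notin.
have neq_vx : v != x by apply: contraNneq v_notin => ->; rewrite mem_head.
have neq_vl : v != last x q by apply: contraNneq v_notin => ->; rewrite mem_last.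
have neq_xl : x != last x q.
  case/lastP: q q_nil uniq_xq {path_xq v_notin neq_vl} => // q y _.
  by rewrite last_rcons /= mem_rcons inE negb_or => /andP [/andP []].
case/orP: (G_comatching neq_xl neq_vx neq_vl) => [adj_vx | adj_vl].
  exists (v :: x :: q) => //.
  by rewrite /is_kpath cons_uniq v_notin uniq_xq /= eqxx adj_vx.
exists (rcons (x :: q) v) => [|y]; last by rewrite mem_rcons.
rewrite /is_kpath size_rcons eqxx rcons_uniq v_notin uniq_xq /= rcons_path path_xq.
by rewrite adj_sym.
Qed.

Lemma comatching_kpath3 v b c : uniq [:: v; b; c] ->
  exists2 p, is_kpath G 3 p & {subset p <= [:: v; b; c]}.
Proof.
rewrite /= !inE !negb_or andbT => /andP [/andP [neq_vb neq_vc] neq_bc].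
wlog adj_vb : b c neq_vb neq_vc neq_bc / adj G v b.
  move=> wlog_adj; case/orP: (G_comatching neq_bc neq_vb neq_vc) => [|adj_vc].
    exact: wlog_adj.
  have [|p kpath_p sub_p] := wlog_adj c b neq_vc neq_vb _ adj_vc; first by rewrite eq_sym.
  by exists p => // y /sub_p; rewrite !inE; case/or3P=> ->; rewrite ?orbT.
have [||||p kpath_p sub_p] := @comatching_extend v [:: b] c.
- by rewrite /= adj_vb.
- by [].
- by rewrite /= inE neq_vb.
- by rewrite !inE negb_or ![c == _]eq_sym neq_vc neq_bc.
by exists p => // y /sub_p; rewrite !inE; case/or3P=> ->; rewrite ?orbT.
Qed.

Lemma comatching_kpath s : uniq s -> 3 <= size s ->
  exists2 p, is_kpath G (size s) p & {subset p <= s}.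
Proof.
elim: s => // v s IH uniq_vs size_vs; have /andP [v_notin uniq_s] := uniq_vs.
have [s_ge3 | s_le2] := ltnP 2 (size s); last first.
  case: s s_le2 size_vs uniq_vs {IH v_notin uniq_s} => [|b [|c []]] // _ _.
  exact: comatching_kpath3.
have [p kpath_p sub_p] := IH uniq_s s_ge3.
case/and3P: kpath_p; case: p sub_p => [|x q] sub_xq /eqP size_xq uniq_xq path_xq.
  by rewrite -size_xq in s_ge3.
have [||p kpath_p sub_p] := comatching_extend path_xq _ uniq_xq (v := v).
- by case: q size_xq {sub_xq uniq_xq path_xq} => // size1; rewrite -size1 in s_ge3.
- by apply: contra v_notin => /sub_xq.
exists p => [|y /sub_p]; first by rewrite /= -size_xq.
by rewrite !inE => /orP [-> // | /sub_xq ->]; rewrite orbT.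
Qed.

Lemma comatching_psi u w k : u != w -> ~~ adj G u w -> 2 < n -> 0 < k <= n ->
  psi G k = if k == 2 then n - 2 else n - k.-1.
Proof.
move=> neq_uw nadj_uw n_gt2 /andP [k_gt0 le_kn]; apply/eqP; rewrite eqn_leq.
have [-> | neq_k2] := eqVneq k 2.
  rewrite (psi2_le_nonedge neq_uw nadj_uw) /=; apply: (psi_ge_of_kpaths (m := 3)) => //.
  case=> [|x [|y [|z []]]] // uniq_xyz _.
  have [[|x' [|y' [|z' []]]] kpath_p sub_p] := comatching_kpath3 uniq_xyz;
    rewrite /is_kpath //.
  case/and3P: kpath_p => _ /and3P [] /norP [neq_xy _] _ _ /= /andP [adj_xy _].
  exists [:: x'; y'] => [|v v_in]; first by rewrite /= inE neq_xy adj_xy.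
  by apply: sub_p; move: v_in; rewrite !inE => /orP [] ->; rewrite ?orbT.
rewrite psi_le_subn ?k_gt0 //=; apply: psi_ge_of_kpaths => // s uniq_s size_s.
have [k1 | k_ge3] := leqP k 1.
  exists s => //; rewrite /is_kpath size_s eqxx uniq_s.
  by case: s size_s {uniq_s} => [|x [|y q]] //= size_s; lia.
by rewrite -size_s; apply: comatching_kpath; rewrite // size_s; lia.
Qed.

End Comatching.

Section MatchingComplement.
Variables (n : nat) (m : nat -> nat).
Hypothesis m_invol : involutive m.

Definition mc_adj (x y : 'I_n) := (x != y) && (val y != m (val x)).

Lemma mc_adj_sym : symmetric mc_adj.
Proof. by move=> x y; rewrite /mc_adj eq_sym [val x == _]eq_sym -inv_eq. Qed.

Lemma mc_adj_irr : irreflexive mc_adj.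
Proof. by move=> x; rewrite /mc_adj eqxx. Qed.

Definition matching_compl := SGraph mc_adj_sym mc_adj_irr.

Lemma matching_compl_comatching : comatching matching_compl.
Proof.
move=> x v w neq_vw neq_xv neq_xw; rewrite /= /mc_adj neq_xv neq_xw /= -negb_and.
by apply: contra neq_vw => /andP [/eqP v_mx /eqP w_mx]; apply/eqP/ord_inj; rewrite v_mx w_mx.
Qed.

Lemma matching_compl_connected : 2 < n -> connected_graph matching_compl.
Proof. exact/comatching_connected/matching_compl_comatching. Qed.

End MatchingComplement.

Definition swap01 (i : nat) : nat :=
  match i with 0 => 1 | 1 => 0 | _ => i end.

Definition swap01_23 (i : nat) : nat :=
  match i with 0 => 1 | 1 => 0 | 2 => 3 | 3 => 2 | _ => i end.

Lemma swap01_invol : involutive swap01.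
Proof. by case=> [|[|i]]. Qed.

Lemma swap01_23_invol : involutive swap01_23.
Proof. by case=> [|[|[|[|i]]]]. Qed.

Section Witnesses.
Variable n : nat.
Hypothesis n_ge4 : 4 <= n.

Definition complete_minus_edge := matching_compl n swap01_invol.
Definition complete_minus_two_edges := matching_compl n swap01_23_invol.

Let vertex i (le_i3 : i <= 3) : 'I_n := Ordinal (leq_ltn_trans le_i3 n_ge4).
Let v0 := vertex (isT : 0 <= 3).
Let v1 := vertex (isT : 1 <= 3).
Let v2 := vertex (isT : 2 <= 3).
Let v3 := vertex (isT : 3 <= 3).

Lemma complete_minus_edge_nonadj x y :
  x != y -> ~~ adj complete_minus_edge x y -> val x < 2.
Proof.
rewrite /= /mc_adj => neq_xy; rewrite neq_xy negbK => /eqP y_swap.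
by apply: contraNT neq_xy; case: x y_swap => [[|[|i]] ?] //= y_i ?; apply/eqP/ord_inj.
Qed.

Lemma not_isomorphic_minus_edges :
  ~ isomorphic complete_minus_edge complete_minus_two_edges.
Proof.
case=> f [[g fK gK] f_adj].
have g_nonadj u w : u != w -> ~~ adj complete_minus_two_edges u w -> val (g u) < 2.
  move=> neq_uw nadj_uw; apply: (complete_minus_edge_nonadj (y := g w)).
    by rewrite (can_eq gK).
  by rewrite -f_adj !gK.
have uniq_g : uniq [seq val (g x) | x <- [:: v0; v1; v2; v3]].
  by rewrite (map_inj_uniq (inj_comp val_inj (can_inj gK))).
have sub_g : {subset [seq val (g x) | x <- [:: v0; v1; v2; v3]] <= iota 0 2}.
  move=> _ /mapP [x x_in ->]; rewrite mem_iota.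
  by move: x_in; rewrite !inE => /or4P [] /eqP ->;
    [ apply: (g_nonadj _ v1) | apply: (g_nonadj _ v0)
    | apply: (g_nonadj _ v3) | apply: (g_nonadj _ v2)].
by have := uniq_leq_size uniq_g sub_g.
Qed.

Lemma path_seq_minus_edges :
  path_seq complete_minus_edge = path_seq complete_minus_two_edges.
Proof.
apply/eq_in_map => k; rewrite mem_iota add1n ltnS => k_range.
have n_gt2 := ltnW n_ge4.
rewrite (comatching_psi (matching_compl_comatching swap01_invol) (u := v0) (w := v1)) ?n_gt2 //.
by rewrite (comatching_psi (matching_compl_comatching swap01_23_invol) (u := v0) (w := v1)) ?n_gt2.
Qed.

End Witnesses.

Theorem mainTheorem7 (n : nat) (hn : 4 <= n) :
  exists G H : sgraph n,
    [/\ connected_graph G, connected_graph H,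
        path_seq G = path_seq H & ~ isomorphic G H].
Proof.
exists (complete_minus_edge n), (complete_minus_two_edges n); split.
- by apply: matching_compl_connected; lia.
- by apply: matching_compl_connected; lia.
- exact: path_seq_minus_edges.
- exact: not_isomorphic_minus_edges.
Qed.
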